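(* Let $a,b,c,d$ be integers with $1=a\le b\le c\le d$ and let $$M=\begin{bmatrix}a&-1&-1&-1\\-1&b&-1&-1\\-1&-1&c&-1\\-1&-1&-1&d\end{bmatrix}.$$ If $\det M=0$, then $b\le5$. Moreover: if $b=3$ and $c\ge7$, then $c=d=7$; if $b=4$, then $c=4$ and $d=9$; if $b=5$, then $c=d=5$. *)

From mathcomp Require Import all_boot all_order all_algebra.
Set Implicit Arguments. Unset Strict Implicit. Unset Printing Implicit Defensive.
Import GRing.Theory Num.Theory.
Local Open Scope ring_scope.

Definition Mabcd (a b c d : int) : 'M[int]_4 :=
  \matrix_(i < 4, j < 4)
    if i == j then [:: a; b; c; d]`_i else -1.

From mathcomp Require Import all_boot all_order all_algebra zify ring.
Import GRing.Theory Num.Theory.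
Local Open Scope ring_scope.

(* Adding the all-ones matrix to [Mabcd a b c d] gives the diagonal matrix
   with entries p = a+1, q = b+1, r = c+1, s = d+1, so the determinant is
   p q r s (1 - 1/p - 1/q - 1/r - 1/s).  For a = 1 it vanishes exactly when
   1/q + 1/r + 1/s = 1/2; since 1/q is the largest of the three fractions,
   q <= 6, and once q is fixed the remaining equation factors as a product
   of two linear terms equal to a constant, which leaves finitely many
   solutions. *)

Lemma expand_det_row0 (R : comPzRingType) n (A : 'M[R]_n.+1) :
  \det A = \sum_(j < n.+1) A ord0 j * (-1) ^+ j * \det (row' ord0 (col' j A)).
Proof. by rewrite (expand_det_row _ ord0); apply: eq_bigr => j _; rewrite mulrA. Qed.

Lemma det_Mabcd (a b c d : int) :
  \det (Mabcd a b c d) =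
    (a + 1) * (b + 1) * (c + 1) * (d + 1)
    - ((b + 1) * (c + 1) * (d + 1) + (a + 1) * (c + 1) * (d + 1)
       + (a + 1) * (b + 1) * (d + 1) + (a + 1) * (b + 1) * (c + 1)).
Proof. by rewrite !(expand_det_row0, big_ord_recr, big_ord0, det_mx00) /= !mxE /=; ring. Qed.

Lemma det_Mabcd1_eq0 (b c d : int) :
  \det (Mabcd 1 b c d) = 0 ->
  (b + 1) * (c + 1) * (d + 1)
    = 2 * ((c + 1) * (d + 1) + (b + 1) * (d + 1) + (b + 1) * (c + 1)).
Proof. by rewrite det_Mabcd => det0; apply: subr0_eq; rewrite -[RHS]det0; ring. Qed.

Section HalfAsSumOfThreeUnitFractions.

Context {q r s : int}.
Hypotheses (q_gt0 : 0 < q) (le_qr : q <= r) (le_rs : r <= s).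
Hypothesis half_eq : q * r * s = 2 * (r * s + q * s + q * r).

Lemma half_sum3_le6 : q <= 6.
Proof.
have rs_gt0 : 0 < r * s by nia.
have : q * (r * s) <= 6 * (r * s) by nia.
by rewrite ler_pM2r.
Qed.

Lemma half_sum3_q4 : q = 4 -> 8 <= r -> r = 8 /\ s = 8.
Proof.
move=> q4 le8r; have factor : (r - 4) * (s - 4) = 16 by move: half_eq; rewrite q4; lia.
by nia.
Qed.

Lemma half_sum3_q5 : q = 5 -> r = 5 /\ s = 10.
Proof.
move=> q5; have factor : (3 * r - 10) * (3 * s - 10) = 100 by move: half_eq; rewrite q5; lia.
have r_le6 : r <= 6.
  have [//|r_gt6] := lerP r 6.
  have : 11 * 11 <= (3 * r - 10) * (3 * s - 10) by apply: ler_pM; lia.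
  by rewrite factor.
have [r5|r6] : r = 5 \/ r = 6 by lia.
- by move: factor; rewrite r5; lia.
- by move: factor; rewrite r6; lia.
Qed.

Lemma half_sum3_q6 : q = 6 -> r = 6 /\ s = 6.
Proof.
move=> q6; have factor : (r - 3) * (s - 3) = 9 by move: half_eq; rewrite q6; lia.
by nia.
Qed.

End HalfAsSumOfThreeUnitFractions.

Theorem lemma3p7 (a b c d : int) :
  a = 1 -> a <= b -> b <= c -> c <= d ->
  \det (Mabcd a b c d) = 0 ->
  [/\ b <= 5,
      (b = 3 -> 7 <= c -> c = 7 /\ d = 7),
      (b = 4 -> c = 4 /\ d = 9)
    & (b = 5 -> c = 5 /\ d = 5)].
Proof.
move=> -> le1b lebc lecd /det_Mabcd1_eq0 half_eq.
have q_gt0 : 0 < b + 1 by lia.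
have le_qr : b + 1 <= c + 1 by lia.
have le_rs : c + 1 <= d + 1 by lia.
have := half_sum3_le6 q_gt0 le_qr le_rs half_eq.
have := half_sum3_q4 q_gt0 le_qr le_rs half_eq.
have := half_sum3_q5 q_gt0 le_qr le_rs half_eq.
have := half_sum3_q6 q_gt0 le_qr le_rs half_eq.
by clear half_eq; split; lia.
Qed.
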